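(* Let $\mathcal{A}$ be a complex unital Banach algebra and let $x_1,x_2\in\mathcal{A}$ with $x_1x_2=0$. (i) If $x_1,x_2\in\mathcal{A}^d$, then $x_1+x_2\in\mathcal{A}^d$ and $$(x_1+x_2)^d=\sum_{n=1}^{i(x_2)}(1-x_2x_2^d)x_2^{n-1}(x_1^d)^n+\sum_{n=1}^{i(x_1)}(x_2^d)^nx_1^{n-1}(1-x_1x_1^d).$$ (ii) If $x_1+x_2\in\mathcal{A}^d$ and $x_2\in\mathcal{A}^d$, then $x_1\in\mathcal{A}^d$. If $x_1+x_2\in\mathcal{A}^d$ and $x_1\in\mathcal{A}^d$, then $x_2\in\mathcal{A}^d$ and $x_2^d=(x_1+x_2)^d-\big((x_1+x_2)^d\big)^2x_1$.
   Context: $\mathcal{A}$ is a complex unital Banach algebra with unit $1$. An element $a\in\mathcal{A}$ is Drazin invertible if there exists $b\in\mathcal{A}$ (the Drazin inverse, unique, denoted $a^d$) with $ab=ba$, $bab=b$, and $(a(1-ab))^n=0$ for some $n\in\mathbb{N}$; the smallest such $n$ is the Drazin index $i(a)$. $\mathcal{A}^d$ denotes the set of Drazin invertible elements of $\mathcal{A}$. *)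

From HB Require Import structures.
From mathcomp Require Import all_boot all_order all_algebra.
From mathcomp Require Import complex.
From mathcomp Require Import all_classical all_reals.
Set Implicit Arguments. Unset Strict Implicit. Unset Printing Implicit Defensive.
Import Order.TTheory GRing.Theory Num.Theory.
Local Open Scope ring_scope.

HB.mixin Record isBanachAlgebra (R : realType) A of GRing.Algebra R[i] A := {
  bnorm : A -> R;
  bnorm_ge0 : forall x : A, 0 <= bnorm x;
  bnorm_eq0 : forall x : A, bnorm x = 0 -> x = 0;
  bnormD : forall x y : A, bnorm (x + y) <= bnorm x + bnorm y;
  bnormZ : forall (l : R[i]) (x : A), ((bnorm (l *: x))%:C)%C = `|l| * ((bnorm x)%:C)%C;
  bnormM : forall x y : A, bnorm (x * y) <= bnorm x * bnorm y;
  bnorm_complete : forall u : nat -> A,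
    (forall e : R, 0 < e -> exists N : nat, forall m n : nat,
        (N <= m)%N -> (N <= n)%N -> bnorm (u m - u n) < e) ->
    exists l : A, forall e : R, 0 < e -> exists N : nat, forall n : nat,
        (N <= n)%N -> bnorm (u n - l) < e
}.

#[short(type="banachAlgType")]
HB.structure Definition BanachAlgebra (R : realType) :=
  {A of GRing.Algebra R[i] A & isBanachAlgebra R A}.

Section Drazin.
Variables (R : realType) (A : banachAlgType R).

Definition is_drazin_inverse (a b : A) : Prop :=
  [/\ a * b = b * a, b * a * b = b & exists n : nat, (a * (1 - a * b)) ^+ n = 0].

Definition drazin_invertible (a : A) : Prop := exists b, is_drazin_inverse a b.

(* the Drazin inverse a^d (chosen by choice; when a is Drazin invertible
   it is the (unique) Drazin inverse of a) *)
Definition dinv (a : A) : A := xget 0 [set b | is_drazin_inverse a b].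

Definition dindex (a : A) : nat :=
  xget 0%N [set n | (a * (1 - a * dinv a)) ^+ n = 0 /\
                   forall m, (a * (1 - a * dinv a)) ^+ m = 0 -> (n <= m)%N].
End Drazin.

From HB Require Import structures.
From mathcomp Require Import all_boot all_order all_algebra.
From mathcomp Require Import complex.
From mathcomp Require Import all_classical all_reals.
From mathcomp Require Import zify.
Import Order.TTheory GRing.Theory Num.Theory.
Local Open Scope ring_scope.
Set Implicit Arguments. Unset Strict Implicit. Unset Printing Implicit Defensive.

(* Any two Drazin pairs (a, a'), (c, c') intertwined by x (a x = x c)
   also satisfy a' x = x c'; in particular the Drazin inverse is unique.
   (i) Since x1 x2 = 0 we get d1 x2 = x1 d2 = d1 d2 = 0 for di = xi^d, and the
   displayed sum Y is checked directly to be a Drazin inverse of s = x1 + x2: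
   s Y and Y s telescope to the same element E, Y E = Y, and the binomial
   expansion of s^N (valid since x1 x2 = 0) gives s^N (1 - E) = 0.
   (ii) s x2 = x2^2 intertwines s with x2, so s^d x2 = x2 x2^d, which makes
   s^d - x2 (s^d)^2 a Drazin inverse of x1 = s - x2.  The last claim is the same
   computation in the opposite ring, where x1 s = x1^2 reads s x1 = x1^2. *)

Lemma sum_nat_head (V : nmodType) m (f : nat -> V) : (0 < m)%N ->
  (forall n, (0 < n)%N -> f n = 0) -> \sum_(0 <= n < m) f n = f 0%N.
Proof.
by case: m => // m _ f0; rewrite big_nat_recl // big1 ?addr0 // => n _; apply: f0.
Qed.

Lemma sum_nat_shift (V : zmodType) m (f : nat -> V) : f m = 0 ->
  \sum_(0 <= n < m) f n.+1 = \sum_(0 <= n < m) f n - f 0%N.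
Proof.
move=> fm; rewrite -[LHS](subrK (\sum_(0 <= n < m) f n)) -sumrB.
by rewrite telescope_sumr // fm sub0r addrC.
Qed.

Lemma sum_nat_trunc (V : nmodType) k m (f : nat -> V) : (k <= m)%N ->
  (forall n, (k <= n)%N -> f n = 0) ->
  \sum_(0 <= n < m) f n = \sum_(0 <= n < k) f n.
Proof.
move=> km fk; rewrite (@big_cat_nat _ _ _ k 0 m) //= [X in _ + X]big_nat_cond.
by rewrite [X in _ + X]big1 ?addr0 // => n /andP[/andP[kn _] _]; apply: fk.
Qed.

Section DrazinRing.
Variable T : nzRingType.
Implicit Types a b c s t x u : T.

Lemma expr_mul_proj a b n : a * b = b * a -> b * a * b = b ->
  (a * (1 - a * b)) ^+ n.+1 = a ^+ n.+1 * (1 - a * b).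
Proof.
move=> ab bab; rewrite exprMn_comm; last first.
  by rewrite /GRing.comm mulrBr mulrBl mulr1 mul1r -mulrA -ab.
congr (_ * _); elim: n => [|n IH]; first by rewrite expr1.
rewrite exprS IH mulrBr mulr1 mulrBl mul1r -mulrA (mulrA b) bab.
by rewrite subrr subr0.
Qed.

Lemma proj_exprC a b n : a * b = b * a ->
  (1 - a * b) * a ^+ n = a ^+ n * (1 - a * b).
Proof.
by move=> ab; apply/commrX/commr_sym/commrB; [apply: commr1 | apply: commrM].
Qed.

Lemma exprDn_mul0 a b n : a * b = 0 ->
  (a + b) ^+ n = \sum_(0 <= j < n.+1) b ^+ (n - j) * a ^+ j.
Proof.
move=> ab; elim: n => [|n IH]; first by rewrite big_nat1 !expr0 mulr1.
rewrite exprSr IH mulr_suml.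
under eq_bigr => j _ do rewrite mulrDr -mulrA -exprSr.
rewrite big_split /= [X in _ + X]big_nat_recl // [X in _ + (_ + X)]big1; last first.
  by move=> j _; rewrite (exprSr a) !mulrA -mulrA ab mulr0.
rewrite [in RHS]big_nat_recl // !subn0 !expr0 !mulr1 addr0 -exprSr addrC.
by under [in RHS]eq_bigr => i _ do rewrite subSS.
Qed.

(* [b] is a Drazin inverse of [a], and [k] bounds the Drazin index of [a]. *)
Definition drazin a b k :=
  [/\ a * b = b * a, b * a * b = b & a ^+ k * (1 - a * b) = 0].

Lemma drazinW a b k l : (k <= l)%N -> drazin a b k -> drazin a b l.
Proof.
move=> kl [ab bab akp]; split=> //.
by rewrite -(subnK kl) exprD -mulrA akp mulr0.
Qed.

Section OneInverse.
Variables (a b : T) (k : nat).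
Hypothesis D : drazin a b k.

Lemma drazin_abb : a * b * b = b.
Proof. by case: D => ab bab _; rewrite ab. Qed.

Lemma drazin_bba : b * b * a = b.
Proof. by case: D => ab bab _; rewrite -mulrA -ab mulrA. Qed.

Lemma drazin_idem : a * b * (a * b) = a * b.
Proof. by case: D => _ bab _; rewrite mulrA -(mulrA a b a) -mulrA bab. Qed.

Lemma drazin_projC : a * (1 - a * b) = (1 - a * b) * a.
Proof. by case: D => ab _ _; rewrite mulrBr mulrBl mulr1 mul1r -mulrA -ab. Qed.

Lemma drazin_proj_mul : (1 - a * b) * (a * b) = 0.
Proof. by rewrite mulrBl mul1r drazin_idem subrr. Qed.

Lemma drazin_projX : (1 - a * b) * a ^+ k = 0.
Proof. by case: D => ab _ akp; rewrite proj_exprC. Qed.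

Lemma drazin_exprV n : b = b ^+ n.+1 * a ^+ n.
Proof.
case: D => ab _ _; rewrite exprS -mulrA -(exprMn_comm n (esym ab)).
by elim: n => [|n IH]; rewrite ?expr0 ?mulr1 // exprSr mulrA -IH mulrA drazin_bba.
Qed.

Lemma drazin_exprVl n : b = a ^+ n * b ^+ n.+1.
Proof.
rewrite {1}(drazin_exprV n); apply/commrX/commr_sym/commrX.
by case: D.
Qed.

Lemma drazin_expr_mulV i j : (j < i)%N ->
  a ^+ i * b ^+ j.+1 = a ^+ (i - j.+1) * (a * b).
Proof.
move=> ji; rewrite -{1}(subnK ji) exprD -mulrA -exprMn_comm; last by case: D.
by congr (_ * _); elim: j {ji} => [|j IH]; rewrite ?expr1 // exprS IH drazin_idem.
Qed.

End OneInverse.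

(* Both sides equal [a * a' * x * c']. *)
Lemma drazin_intertwine a a' c c' x k l : drazin a a' k -> drazin c c' l ->
  a * x = x * c -> a' * x = x * c'.
Proof.
move=> Da Dc axc; set N := (k + l)%N.
have {}Da : drazin a a' N by apply: drazinW Da; apply: leq_addr.
have {}Dc : drazin c c' N by apply: drazinW Dc; apply: leq_addl.
have aXx n : a ^+ n * x = x * c ^+ n.
  elim: n => [|n IH]; first by rewrite !expr0 mul1r mulr1.
  by rewrite exprSr -mulrA axc mulrA IH exprSr mulrA.
have a'xE : a' * x = a' * x * (c * c').
  apply/eqP; rewrite -subr_eq0 -{1}(mulr1 (a' * x)) -mulrBr.
  rewrite (drazin_exprV Da N) -(mulrA _ (a ^+ N)) aXx !mulrA -(mulrA _ (c ^+ N)).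
  by case: Dc => _ _ ->; rewrite mulr0.
have xc'E : x * c' = a * a' * x * c'.
  apply/eqP; rewrite -subr_eq0 -{1}(mul1r x) -!mulrBl.
  rewrite (drazin_exprVl Dc N) mulrA -(mulrA _ x) -aXx mulrA (drazin_projX Da).
  by rewrite !mul0r.
by rewrite a'xE mulrA -(mulrA a') -axc mulrA; case: Da => <- _ _; rewrite -xc'E.
Qed.

Lemma drazin_uniq a b c k l : drazin a b k -> drazin a c l -> b = c.
Proof.
move=> Db Dc; have := drazin_intertwine Db Dc (etrans (mulr1 a) (esym (mul1r a))).
by rewrite mulr1 mul1r.
Qed.

Lemma drazin_subr s t x u k l : drazin s t k -> drazin x u l -> s * x = x * x ->
  drazin (s - x) (t - x * t * t) k.+1.
Proof.
move=> Ds Dx sxx; have tx : t * x = x * u := drazin_intertwine Ds Dx sxx.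
have [st_ts tst skp] := Ds.
have xttx : x * t * t * x = t * x.
  by rewrite -!mulrA tx (mulrA t x u) tx (drazin_abb Dx).
have vs : (t - x * t * t) * (s - x) = s * t - x * t.
  by rewrite mulrBr !mulrBl xttx subrr subr0 -!mulrA -st_ts (mulrA t s t) tst.
have sv : (s - x) * (t - x * t * t) = s * t - x * t.
  by rewrite mulrBr !mulrBl !mulrA sxx subrr subr0.
have stx : s * t * x = x * t * x by rewrite -!mulrA tx !mulrA sxx.
have s'x : (s - x) * x = 0 by rewrite mulrBl sxx subrr.
have s's : (s - x) * s = (s - x) * (s - x) by rewrite [RHS]mulrBr s'x subr0.
have s'X n : (s - x) ^+ n.+1 = (s - x) * s ^+ n.
  elim: n => [|n IH]; first by rewrite expr1 expr0 mulr1.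
  by rewrite exprS IH mulrA -s's -mulrA -exprS.
split.
- by rewrite sv vs.
- by rewrite vs mulrBr !mulrBl !mulrA stx subrr subr0 (drazin_abb Ds).
- rewrite sv opprB addrCA mulrDr (s'X k) -[X in _ + X]mulrA skp mulr0 addr0.
  by rewrite -s'X exprSr mulrA -(mulrA _ (s - x)) s'x mulr0 mul0r.
Qed.

End DrazinRing.

Lemma drazin_rev (T : nzRingType) (a b : T) k : @drazin T^c a b k <-> drazin a b k.
Proof.
split=> [[ab bab akp] | D].
- have ab' : a * b = b * a by [].
  have bab' : b * a * b = b by rewrite -[LHS]mulrA.
  have akp' : (1 - a * b) * a ^+ k = 0 by rewrite ab' -revrX.
  by split=> //; rewrite -proj_exprC.
- have [ab bab _] := D; split.
  - exact: esym.
  - by rewrite [LHS]mulrA.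
  - by rewrite revrX; have := drazin_projX D; rewrite ab.
Qed.

Lemma drazin_subl (T : nzRingType) (s t x u : T) k l :
  drazin s t k -> drazin x u l -> x * s = x * x ->
  drazin (s - x) (t - t * t * x) k.+1.
Proof.
move=> /drazin_rev Ds /drazin_rev Dx xss.
have ttx : t * t * x = (x : T^c) * t * t by rewrite -[RHS]mulrA.
by apply/drazin_rev; rewrite ttx; apply: drazin_subr Ds Dx xss.
Qed.

Section DrazinAdd.
Variables (T : nzRingType) (x1 x2 d1 d2 : T) (m : nat).
Hypotheses (x12 : x1 * x2 = 0) (D1 : drazin x1 d1 m) (D2 : drazin x2 d2 m).
Hypothesis m_gt0 : (0 < m)%N.

Local Notation p1 := (1 - x1 * d1).
Local Notation p2 := (1 - x2 * d2).
Local Notation e1 := (x1 * d1).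
Local Notation e2 := (x2 * d2).
Local Notation F := (\sum_(0 <= n < m) p2 * x2 ^+ n * d1 ^+ n.+1).
Local Notation G := (\sum_(0 <= n < m) d2 ^+ n.+1 * x1 ^+ n * p1).
(* The candidate inverse, with both sums cut at the common bound [m]; the
   terms [h n] and [k n] telescope in [s * Y] and [Y * s]. *)
Local Notation Y := (F + G).
Local Notation h n := (p2 * x2 ^+ n * d1 ^+ n * e1).
Local Notation k n := (e2 * d2 ^+ n * x1 ^+ n * p1).
Local Notation H := (\sum_(0 <= n < m) h n).
Local Notation K := (\sum_(0 <= n < m) k n).

Let d1x2 : d1 * x2 = 0.
Proof. by rewrite -(drazin_bba D1) -mulrA x12 mulr0. Qed.
Let x1d2 : x1 * d2 = 0.
Proof. by rewrite -(drazin_abb D2) !mulrA x12 !mul0r. Qed.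
Let d1d2 : d1 * d2 = 0.
Proof. by rewrite -(drazin_abb D2) !mulrA d1x2 !mul0r. Qed.
Let x1p2 : x1 * p2 = x1.
Proof. by rewrite mulrBr mulr1 mulrA x12 mul0r subr0. Qed.
Let d1p2 : d1 * p2 = d1.
Proof. by rewrite mulrBr mulr1 mulrA d1x2 mul0r subr0. Qed.
Let p1x2 : p1 * x2 = x2.
Proof. by rewrite mulrBl mul1r -mulrA d1x2 mulr0 subr0. Qed.
Let e1C : e1 = d1 * x1. Proof. by case: D1. Qed.
Let e2C : e2 = d2 * x2. Proof. by case: D2. Qed.

Let x1Y : x1 * Y = e1.
Proof.
rewrite mulrDr !mulr_sumr [X in _ + X]big1 => [|n _]; last first.
  by rewrite !mulrA exprS mulrA x1d2 !mul0r.
rewrite addr0 (sum_nat_head m_gt0) => [|[|n] //= _].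
  by rewrite !mulrA x1p2 expr0 mulr1 expr1.
by rewrite !mulrA x1p2 exprS mulrA x12 !mul0r.
Qed.

Let d1Y : d1 * Y = d1 * d1.
Proof.
rewrite mulrDr !mulr_sumr [X in _ + X]big1 => [|n _]; last first.
  by rewrite !mulrA exprS mulrA d1d2 !mul0r.
rewrite addr0 (sum_nat_head m_gt0) => [|[|n] //= _].
  by rewrite !mulrA d1p2 expr0 mulr1 expr1.
by rewrite !mulrA d1p2 exprS mulrA d1x2 !mul0r.
Qed.

Let d1Xe1 n : d1 ^+ n.+1 * e1 = d1 ^+ n.+1.
Proof. by case: D1 => _ bab _; rewrite exprSr -mulrA (mulrA d1 x1 d1) bab. Qed.
Let e2d2X n : e2 * d2 ^+ n.+1 = d2 ^+ n.+1.
Proof. by rewrite exprS mulrA (drazin_abb D2). Qed.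

Let sY : (x1 + x2) * Y = H + K + e2 * e1.
Proof.
have x2F : x2 * F = \sum_(0 <= n < m) h n.+1.
  rewrite mulr_sumr; apply: eq_bigr => n _.
  by rewrite -[RHS]mulrA d1Xe1 !mulrA (drazin_projC D2) -(mulrA p2 x2) -exprS.
have x2G : x2 * G = K.
  by rewrite mulr_sumr; apply: eq_bigr => n _; rewrite exprS !mulrA.
rewrite mulrDl x1Y mulrDr x2F x2G (@sum_nat_shift _ m (fun n => h n)); last first.
  by rewrite -mulrA (drazin_projX D2) mul0r.
by rewrite expr0 !mulr1 mulrBl mul1r opprB addrCA (addrC e1) addrACA subrK.
Qed.

Let Gs : G * (x1 + x2) = \sum_(0 <= n < m) k n.+1 + e2.
Proof.
rewrite mulr_suml; under eq_bigr => n _ do rewrite mulrDr.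
rewrite big_split /=; congr (_ + _).
  apply: eq_bigr => n _; rewrite e2d2X -mulrA -(drazin_projC D1) mulrA.
  by rewrite -(mulrA _ _ x1) -exprSr.
rewrite (sum_nat_head m_gt0) => [|[|n] // _].
  by rewrite expr1 expr0 mulr1 -mulrA p1x2 -e2C.
by rewrite -mulrA p1x2 -mulrA (exprSr x1) -mulrA x12 !mulr0.
Qed.

Let Ys : Y * (x1 + x2) = H + K + e2 * e1.
Proof.
have Fs : F * (x1 + x2) = H.
  rewrite mulr_suml; apply: eq_bigr => n _.
  by rewrite mulrDr exprSr -!mulrA d1x2 !mulr0 addr0 -e1C.
rewrite mulrDl Fs Gs (@sum_nat_shift _ m (fun n => k n)); last first.
  by rewrite -mulrA; case: D1 => _ _ ->; rewrite mulr0.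
by rewrite !expr0 !mulr1 mulrBr mulr1 opprB !addrA subrK.
Qed.

Local Notation E := ((x1 + x2) * Y).

Let d1E : d1 * E = d1.
Proof.
rewrite sY -Ys mulrA d1Y mulrDr (drazin_bba D1) -mulrA d1x2 mulr0 addr0.
by [].
Qed.

Let x1E : x1 * E = x1 * e1.
Proof. by rewrite mulrA (mulrDr x1 x1) x12 addr0 -mulrA x1Y. Qed.

Let e2Y : e2 * Y = G.
Proof.
rewrite mulrDr !mulr_sumr big1 ?add0r => [|n _]; last first.
  by rewrite !mulrA mulrBr mulr1 (drazin_idem D2) subrr !mul0r.
by apply: eq_bigr => n _; rewrite !mulrA e2d2X.
Qed.

Let d2E : d2 * E = d2 * e1 + G.
Proof. by rewrite mulrA (mulrDr d2 x1) mulrDl -mulrA x1Y -e2C e2Y. Qed.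

Let x1p1E : x1 * p1 * E = 0.
Proof.
rewrite (drazin_projC D1) -mulrA x1E mulrA -(drazin_projC D1) -mulrA.
by rewrite (drazin_proj_mul D1) mulr0.
Qed.

Let YE : Y * E = Y.
Proof.
rewrite mulrDl; congr (_ + _).
  rewrite mulr_suml; apply: eq_bigr => n _.
  by rewrite exprSr -mulrA -(mulrA (d1 ^+ n)) d1E.
rewrite mulr_suml (sum_nat_head m_gt0) => [|[|n] // _]; last first.
  by rewrite (exprSr x1) -!mulrA (mulrA x1) x1p1E !mulr0.
rewrite expr1 expr0 mulr1 mulrBr mulr1 mulrBl d2E -!mulrA d1E.
by rewrite addrAC subrr add0r.
Qed.

Let x1X_projE j : x1 ^+ j.+1 * (1 - E) = x1 ^+ j.+1 * p1.
Proof.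
elim: j => [|j IH]; first by rewrite expr1 !mulrBr !mulr1 x1E.
by rewrite exprS -!mulrA IH.
Qed.

Let e2_projE : e2 * (1 - E) = - \sum_(0 <= n < m) k n.+1.
Proof. by rewrite sY -Ys mulrBr mulr1 mulrA e2Y Gs opprD addrCA subrr addr0. Qed.

(* In the binomial expansion of [s ^+ N], the term [x2 ^+ N * (1 - E)] cancels
   the others up to factors [x2 ^+ (N - n.+1) * (1 - x2 * d2)], which vanish. *)
Let sX_projE : (x1 + x2) ^+ (m + m) * (1 - E) = 0.
Proof.
set N := (m + m)%N; have mN : (m <= N)%N by apply: leq_addr.
rewrite (exprDn_mul0 N x12) mulr_suml big_nat_recl // subn0 expr0 mulr1.
have x2XE : x2 ^+ N * (1 - E) =
    - \sum_(0 <= n < m) x2 ^+ (N - n.+1) * e2 * x1 ^+ n.+1 * p1.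
  have -> : x2 ^+ N = x2 ^+ N * e2.
    apply/eqP; rewrite -subr_eq0 -{1}(mulr1 (x2 ^+ N)) -mulrBr.
    by case: (drazinW mN D2) => _ _ ->.
  rewrite -mulrA e2_projE mulrN mulr_sumr; congr (- _).
  apply: eq_big_nat => n /andP[_ nm].
  rewrite e2d2X !mulrA (drazin_expr_mulV D2) ?mulrA //.
  exact: leq_trans nm mN.
have x1XE : \sum_(0 <= j < N) x2 ^+ (N - j.+1) * x1 ^+ j.+1 * (1 - E) =
    \sum_(0 <= j < m) x2 ^+ (N - j.+1) * x1 ^+ j.+1 * p1.
  under eq_bigr => j _ do rewrite -mulrA x1X_projE mulrA.
  apply: sum_nat_trunc => // n mn; rewrite -mulrA.
  by case: (drazinW (leqW mn) D1) => _ _ ->; rewrite mulr0.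
rewrite x2XE x1XE addrC -sumrB big_nat_cond big1 // => n /andP[/andP[_ nm] _].
have mNn : (m <= N - n.+1)%N by rewrite /N; lia.
rewrite -!mulrA -mulrBr (mulrA x2 d2) -{1}(mul1r (x1 ^+ n.+1 * p1)) -mulrBl mulrA.
by case: (drazinW mNn D2) => _ _ ->; rewrite mul0r.
Qed.

Lemma drazin_add_common : drazin (x1 + x2) Y (m + m).
Proof. by split; [rewrite sY Ys | rewrite -mulrA YE | apply: sX_projE]. Qed.

End DrazinAdd.

Definition drazin_sum (T : nzRingType) (x1 x2 d1 d2 : T) (k1 k2 : nat) : T :=
  \sum_(1 <= n < k2.+1) (1 - x2 * d2) * x2 ^+ (n - 1) * d1 ^+ n
  + \sum_(1 <= n < k1.+1) d2 ^+ n * x1 ^+ (n - 1) * (1 - x1 * d1).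

Lemma drazin_add (T : nzRingType) (x1 x2 d1 d2 : T) k1 k2 :
  x1 * x2 = 0 -> drazin x1 d1 k1 -> drazin x2 d2 k2 ->
  drazin (x1 + x2) (drazin_sum x1 x2 d1 d2 k1 k2) (k1 + k2).+1.*2.
Proof.
move=> x12 D1 D2; set m := (k1 + k2).+1.
have k1m : (k1 <= m)%N by rewrite /m; lia.
have k2m : (k2 <= m)%N by rewrite /m; lia.
have -> : drazin_sum x1 x2 d1 d2 k1 k2 =
    \sum_(0 <= n < k2) (1 - x2 * d2) * x2 ^+ n * d1 ^+ n.+1
    + \sum_(0 <= n < k1) d2 ^+ n.+1 * x1 ^+ n * (1 - x1 * d1).
  by rewrite /drazin_sum !big_add1; congr (_ + _);
    apply: eq_bigr => n _; rewrite subn1.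
rewrite -addnn -(sum_nat_trunc k2m) => [|n k2n]; last first.
  by rewrite (drazin_projX (drazinW k2n D2)) mul0r.
rewrite -(sum_nat_trunc k1m) => [|n k1n]; last first.
  by rewrite -mulrA; case: (drazinW k1n D1) => _ _ ->; rewrite mulr0.
exact: drazin_add_common x12 (drazinW k1m D1) (drazinW k2m D2) (ltn0Sn _).
Qed.

Section BanachDrazin.
Variables (R : realType) (A : banachAlgType R).
Implicit Types a b : A.

Lemma drazin_inverseP a b : is_drazin_inverse a b <-> exists k, drazin a b k.
Proof.
split=> [[ab bab [[|n] an]] | [k [ab bab akp]]].
- by move/eqP: an; rewrite expr0 oner_eq0.
- by exists n.+1; split; rewrite // -expr_mul_proj.
- by split=> //; exists k.+1; rewrite expr_mul_proj // exprS -mulrA akp mulr0.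
Qed.

Lemma drazin_invertible_of a b k : drazin a b k -> drazin_invertible a.
Proof. by move=> D; exists b; apply/drazin_inverseP; exists k. Qed.

Lemma dinv_spec a : drazin_invertible a -> is_drazin_inverse a (dinv a).
Proof. exact: xgetPex. Qed.

Lemma dinv_eq a b k : drazin a b k -> dinv a = b.
Proof.
move=> D; have /drazin_inverseP[l Dl] := dinv_spec (drazin_invertible_of D).
exact: drazin_uniq Dl D.
Qed.

Lemma dinv_drazin a : drazin_invertible a -> drazin a (dinv a) (dindex a).
Proof.
move=> /dinv_spec[ab bab [n an]].
set q := a * (1 - a * dinv a) in an *.
have : q ^+ dindex a = 0.
  have qn : exists j, q ^+ j == 0 by exists n; apply/eqP.
  have [j qj jmin] := ex_minnP qn.
  case: (@xgetPex _ 0%N [set i | q ^+ i = 0 /\ forall j, q ^+ j = 0 -> (i <= j)%N]).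
    by exists j; split=> [|i /eqP]; [apply/eqP: qj | apply: jmin].
  by move=> qd _; exact: qd.
case: (dindex a) => [|j]; first by rewrite expr0 => /eqP; rewrite oner_eq0.
by rewrite /q expr_mul_proj.
Qed.

End BanachDrazin.

Theorem corollary4p2 (R : realType) (A : banachAlgType R) (x1 x2 : A) :
  x1 * x2 = 0 ->
  ((drazin_invertible x1 -> drazin_invertible x2 ->
      drazin_invertible (x1 + x2) /\
      dinv (x1 + x2) =
        \sum_(1 <= n < (dindex x2).+1)
           (1 - x2 * dinv x2) * x2 ^+ (n - 1) * dinv x1 ^+ n
      + \sum_(1 <= n < (dindex x1).+1)
           dinv x2 ^+ n * x1 ^+ (n - 1) * (1 - x1 * dinv x1))
   /\ (drazin_invertible (x1 + x2) -> drazin_invertible x2 ->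
         drazin_invertible x1)
   /\ (drazin_invertible (x1 + x2) -> drazin_invertible x1 ->
         drazin_invertible x2 /\
         dinv x2 = dinv (x1 + x2) - dinv (x1 + x2) ^+ 2 * x1)).
Proof.
move=> x12; split; [|split].
- move=> /dinv_drazin D1 /dinv_drazin D2; have D := drazin_add x12 D1 D2.
  by split; [exact: drazin_invertible_of D | exact: dinv_eq D].
- move=> /dinv_drazin Ds /dinv_drazin D2.
  have sx2 : (x1 + x2) * x2 = x2 * x2 by rewrite mulrDl x12 add0r.
  by have := drazin_subr Ds D2 sx2; rewrite addrK; apply: drazin_invertible_of.
- move=> /dinv_drazin Ds /dinv_drazin D1.
  have x1s : x1 * (x1 + x2) = x1 * x1 by rewrite mulrDr x12 addr0.
  have := drazin_subl Ds D1 x1s; rewrite addrC addKr => D2.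
  by split; [exact: drazin_invertible_of D2 | rewrite (dinv_eq D2) expr2].
Qed.
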